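(* Let $V=\{v_1,\dots,v_m\}\subset\mathbb{R}^d$ be a finite set of points and $r\in\mathbb{R}^d$. Let $\mathcal{B}(V,r)$ be the poset, ordered by inclusion, of all weakly $r$-balanced subsets $S\subset V$ with $S\neq V$, and let $\overline{\mathcal{B}}(V,r)$ be the poset, ordered by inclusion, of all $r$-balanced subsets $S\subset V$ with $S\neq V$. Then the order complexes are homotopy equivalent: $\Delta\mathcal{B}(V,r)\simeq\Delta\overline{\mathcal{B}}(V,r)$.
   Context: A subset $S\subset V$ is called weakly $r$-balanced if $r\in\mathrm{conv}(S)$, and $r$-balanced if $r\in\mathrm{relint}(\mathrm{conv}(S))$ (relative interior taken within the affine hull of $S$). For a poset $\mathcal{P}$, $\Delta\mathcal{P}$ denotes its order complex. *)

From mathcomp Require Import all_boot all_order all_algebra.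
From mathcomp Require Import all_classical all_reals all_analysis.
Import numFieldNormedType.Exports.
Set Implicit Arguments. Unset Strict Implicit. Unset Printing Implicit Defensive.
Import Order.TTheory GRing.Theory Num.Theory.
Local Open Scope ring_scope.
Local Open Scope classical_set_scope.

(* Points v : 'I_m -> 'rV[R]_d (the finite set V = {v_1,...,v_m}); a subset
   S of V is represented by its index set S : {set 'I_m}. *)

Definition in_conv (R : realType) (d m : nat) (v : 'I_m -> 'rV[R]_d)
    (S : {set 'I_m}) (x : 'rV[R]_d) : Prop :=
  exists lam : 'I_m -> R,
    [/\ forall i, 0 <= lam i,
        forall i, i \notin S -> lam i = 0,
        \sum_i lam i = 1
      & \sum_i lam i *: v i = x].

Definition in_aff (R : realType) (d m : nat) (v : 'I_m -> 'rV[R]_d)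
    (S : {set 'I_m}) (x : 'rV[R]_d) : Prop :=
  exists mu : 'I_m -> R,
    [/\ forall i, i \notin S -> mu i = 0,
        \sum_i mu i = 1
      & \sum_i mu i *: v i = x].

Definition in_relint_conv (R : realType) (d m : nat) (v : 'I_m -> 'rV[R]_d)
    (S : {set 'I_m}) (x : 'rV[R]_d) : Prop :=
  in_conv v S x /\
  exists2 e : R, 0 < e &
    forall y : 'rV[R]_d, in_aff v S y -> `|y - x| < e -> in_conv v S y.

Definition weakly_balanced (R : realType) (d m : nat) (v : 'I_m -> 'rV[R]_d)
    (r : 'rV[R]_d) (S : {set 'I_m}) : Prop := in_conv v S r.

Definition balanced (R : realType) (d m : nat) (v : 'I_m -> 'rV[R]_d)
    (r : 'rV[R]_d) (S : {set 'I_m}) : Prop := in_relint_conv v S r.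

(* Geometric realization of the order complex of the finite poset
   ({x : T | P x}, le): points are convex combinations (barycentric
   coordinates) of vertices whose support is a chain of the poset. *)
Definition order_complex_realization (R : realType) (T : finType)
    (le : rel T) (P : T -> Prop) : set {ptws T -> (R : topologicalType)} :=
  [set x : {ptws T -> (R : topologicalType)} |
     (forall t, 0 <= x t) /\
     \sum_t x t = 1 /\
     (forall t, x t != 0 -> P t) /\
     (forall s t, x s != 0 -> x t != 0 -> le s t \/ le t s)].

Definition homotopic_on (R : realType) (X : topologicalType) (A : set X)
    (f g : X -> X) : Prop :=
  exists H : R * X -> X,
    [/\ {within [set p : R * X | 0 <= p.1 <= 1 /\ A p.2], continuous H},
        forall t x, 0 <= t <= 1 -> A x -> A (H (t, x)),
        forall x, A x -> H (0, x) = f x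
      & forall x, A x -> H (1, x) = g x].

Definition homotopy_equivalent (R : realType) (X Y : topologicalType)
    (A : set X) (B : set Y) : Prop :=
  exists (f : X -> Y) (g : Y -> X),
    [/\ {within A, continuous f} /\ (forall x, A x -> B (f x)),
        {within B, continuous g} /\ (forall y, B y -> A (g y)),
        homotopic_on R A (g \o f) id
      & homotopic_on R B (f \o g) id].

From mathcomp Require Import all_boot all_order all_algebra.
From mathcomp Require Import all_classical all_reals all_analysis.
From mathcomp Require Import lra.
Import numFieldNormedType.Exports.
Import Order.TTheory GRing.Theory Num.Theory.
Local Open Scope ring_scope.
Local Open Scope classical_set_scope.

(* Call the core of S the set of indices carrying positive weight in some
   convex representation of r by points of S.  Averaging such representations
   gives one that is positive exactly on the core, so r lies in the relative
   interior of conv(core S) whenever S is weakly balanced.  Conversely, if r is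
   in relint conv S then every point of S carries weight in some
   representation, so a balanced set is its own core.  Thus core is a monotone
   map with core S <= S sending weakly balanced sets onto balanced ones and
   fixing the latter; such a deflation of a finite poset onto a subposet is a
   homotopy equivalence of order complexes, by a homotopy that pushes the mass
   of each chain along core starting from its bottom, so that the support stays
   a chain throughout. *)

Lemma continuous_ptws (X : topologicalType) (I : Type) (V : topologicalType)
    (g : X -> {ptws I -> V}) :
  (forall i, continuous (fun x => g x i)) -> continuous g.
Proof.
move=> gi x; apply/(@cvg_sup (I -> V) I
  (fun i => Topological.class (initial_topology (fun h : I -> V => h i)))) => i.
move=> U /= [? [[W oW <-]]] /= Wg /filterS; apply; apply: (gi i x).
exact: open_nbhs_nbhs.
Qed.

Lemma continuous_sumr (V : TopologicalNmodule.type) (X : topologicalType)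
    (J : finType) (P : pred J) (g : J -> X -> V) :
  (forall j, continuous (g j)) -> continuous (fun x => \sum_(j | P j) g j x).
Proof. by move=> gj; apply: continuous_big => //; exact: add_continuous. Qed.

Lemma ler_sum_subpred (R : numDomainType) (J : finType) (P P' : pred J)
    (F : J -> R) :
  (forall j, 0 <= F j) -> (forall j, P j -> P' j) ->
  \sum_(j | P j) F j <= \sum_(j | P' j) F j.
Proof.
move=> F0 PP'; rewrite [leRHS](bigID P) /= (eq_bigl P); last first.
  by move=> j; case Pj: (P j); rewrite ?andbT ?andbF ?PP'.
by rewrite lerDl sumr_ge0.
Qed.

Lemma sumr_neq0P (R : numDomainType) (J : finType) (P : pred J) (F : J -> R) :
  \sum_(j | P j) F j != 0 -> exists2 j, P j & F j != 0.
Proof.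
move=> sum_neq0; apply: contrapT => none; move/eqP: sum_neq0; apply.
apply: big1 => j Pj; apply: contrapT => Fj; apply: none; exists j => //.
exact/eqP.
Qed.

Lemma ler_entry_mx_norm (R : realDomainType) p q (A : 'M[R]_(p, q)) i j :
  `|A i j| <= `|A|.
Proof.
rewrite [leRHS]/Num.Def.normr /= mx_normrE; apply/bigmax_geP; right => /=.
by exists (i, j).
Qed.

Lemma ler_norm_mulmx_entry (R : realDomainType) n p (u : 'rV[R]_n)
    (M : 'M[R]_(n, p)) j :
  `|(u *m M) 0 j| <= `|u| * \sum_k `|M k j|.
Proof.
rewrite mxE mulr_sumr; apply: le_trans (ler_norm_sum _ _ _) _.
by apply: ler_sum => k _; rewrite normrM ler_wpM2r ?ler_entry_mx_norm.
Qed.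

Lemma sumr_delta (V : nmodType) (I : finType) (i : I) (F : I -> V) :
  \sum_j (if j == i then F j else 0) = F i.
Proof. by rewrite -big_mkcond big_pred1_eq. Qed.

Section OrderComplexDeflation.
Context {disp : Order.disp_t} {T : finPOrderType disp} (R : realType).
Variables (P Q : T -> Prop) (f : T -> T).
Hypotheses (f_le : forall S, (f S <= S)%O)
  (f_homo : {homo f : S U / (S <= U)%O})
  (f_PQ : forall S, P S -> Q (f S)) (Q_P : forall S, Q S -> P S)
  (f_Q : forall S, Q S -> f S = S).

Implicit Types (S U : T) (s : R).
Local Notation X := {ptws T -> (R : topologicalType)}.
Let A := @order_complex_realization R _ (<=%O : rel T) P.
Let B := @order_complex_realization R _ (<=%O : rel T) Q.

Definition push (x : X) : X := fun U => \sum_(S | f S == U) x S.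

Definition mass_below (x : X) S : R := \sum_(U | (U < S)%O) x U.

Definition moved s (x : X) S : R :=
  Num.max 0 (Num.min (s - mass_below x S) (x S)).

(* At time s the lowest s units of mass of the chain have been pushed along f.
   The moved part of the chain lies below the unmoved part and f S <= S, so
   the support stays a chain. *)
Definition sweep s (x : X) : X :=
  fun U => \sum_(S | f S == U) moved s x S + (x U - moved s x U).

Lemma ptws_eval_continuous S : continuous (fun x : X => x S : R^o).
Proof. exact: (@proj_continuous _ (fun _ : T => (R : topologicalType)) S). Qed.

Lemma push_continuous : continuous push.
Proof.
apply: continuous_ptws => U; apply: continuous_sumr => S.
exact: ptws_eval_continuous.
Qed.

Lemma snd_eval_continuous {Y : topologicalType} S :
  continuous (fun q : Y * X => q.2 S : R^o).
Proof.
move=> q; apply: (@continuous_comp _ _ _ snd (fun x : X => x S : R^o)).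
  exact: cvg_snd.
exact: ptws_eval_continuous.
Qed.

Lemma moved_continuous S :
  continuous (fun p : R * X => moved (1 - p.1) p.2 S : R^o).
Proof.
move=> p.
have below_cont :
    {for p, continuous (fun q : R * X => 1 - q.1 - mass_below q.2 S : R^o)}.
  apply: continuousB.
    by apply: continuousB; [exact: cst_continuous | exact: cvg_fst].
  apply: (@continuous_sumr R^o _ _ (fun U => (U < S)%O)
    (fun U (q : R * X) => q.2 U)).
  exact: snd_eval_continuous.
exact: (@continuous_max R _ (fun _ => 0 : R^o) _ p
  (@cst_continuous _ _ (0 : R^o) p)
  (continuous_min below_cont (snd_eval_continuous S p))).
Qed.

Lemma sweep_continuous : continuous (fun p : R * X => sweep (1 - p.1) p.2).
Proof.
apply: continuous_ptws => U p.
have moved_sum : {for p, continuous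
    (fun q : R * X => \sum_(S | f S == U) moved (1 - q.1) q.2 S : R^o)}.
  apply: (@continuous_sumr R^o _ _ (fun S => f S == U)
    (fun S (q : R * X) => moved (1 - q.1) q.2 S)).
  exact: moved_continuous.
exact: continuousD moved_sum
  (continuousB (snd_eval_continuous U p) (moved_continuous U p)).
Qed.

Lemma sum_fibers (g : T -> R) : \sum_U \sum_(S | f S == U) g S = \sum_S g S.
Proof. by rewrite [RHS](partition_big f predT). Qed.

Section Chain.
Variable x : X.
Hypothesis Ax : A x.

Let x_ge0 S : 0 <= x S. Proof. by case: Ax. Qed.
Let x_sum1 : \sum_S x S = 1. Proof. by case: Ax => _ []. Qed.
Let x_P S : x S != 0 -> P S. Proof. by case: Ax => _ [_ [xP _]]; exact: xP. Qed.
Let x_chain {S U} : x S != 0 -> x U != 0 -> (S <= U)%O \/ (U <= S)%O.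
Proof. by case: Ax => _ [_ [_ xc]]; exact: xc. Qed.

Lemma mass_below_ge0 S : 0 <= mass_below x S.
Proof. by apply: sumr_ge0 => U _; exact: x_ge0. Qed.

Lemma mass_belowD S : mass_below x S + x S = \sum_(U | (U <= S)%O) x U.
Proof.
rewrite [RHS](bigD1 S) //= addrC; congr (_ + _).
by apply: eq_bigl => U; rewrite lt_neqAle andbC.
Qed.

Lemma mass_belowD_le1 S : mass_below x S + x S <= 1.
Proof. by rewrite mass_belowD -x_sum1; exact: ler_sum_subpred. Qed.

Lemma mass_belowD_le_below {S U} :
  (U < S)%O -> mass_below x U + x U <= mass_below x S.
Proof.
move=> US; rewrite mass_belowD; apply: ler_sum_subpred => // W WU.
exact: le_lt_trans WU US.
Qed.

Lemma moved_ge0 s S : 0 <= moved s x S.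
Proof. by rewrite /moved le_max lexx. Qed.

Lemma moved_le s S : moved s x S <= x S.
Proof. by rewrite /moved ge_max x_ge0 ge_min lexx orbT. Qed.

Lemma moved0 S : moved 0 x S = 0.
Proof. by rewrite /moved max_l // ge_min sub0r oppr_le0 mass_below_ge0. Qed.

Lemma moved1 S : moved 1 x S = x S.
Proof.
have := mass_belowD_le1 S; rewrite /moved => le1.
by rewrite min_r ?max_r ?x_ge0 //; lra.
Qed.

Lemma moved_neq0 {s S} : moved s x S != 0 -> x S != 0.
Proof.
apply: contraNneq => xS0; apply/eqP/le_anti.
by rewrite moved_ge0 -xS0 moved_le.
Qed.

Lemma unmoved_neq0 {s U} : x U - moved s x U != 0 -> x U != 0.
Proof.
apply: contra => /eqP xU0; have := moved_le s U; have := moved_ge0 s U.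
by rewrite xU0 => m_ge0 m_le0; apply/eqP; lra.
Qed.

Lemma moved_le_unmoved {s S U} :
  moved s x S != 0 -> x U - moved s x U != 0 -> (S <= U)%O.
Proof.
move=> mS uU; case: (x_chain (moved_neq0 mS) (unmoved_neq0 uU)) => // US.
move: US; rewrite le_eqVlt => /orP[/eqP-> // | /mass_belowD_le_below below].
exfalso.
have : 0 < moved s x S by rewrite lt_neqAle eq_sym mS moved_ge0.
rewrite /moved lt_max ltxx /= lt_min => /andP[s_gt _].
have : moved s x U < x U.
  rewrite lt_neqAle moved_le andbT.
  by apply: contra uU => /eqP->; rewrite subrr.
rewrite /moved gt_max => /andP[_]; rewrite gt_min ltxx orbF => s_lt.
lra.
Qed.

Lemma sweep_neq0 s U : sweep s x U != 0 ->
  (exists2 S, f S = U & moved s x S != 0) \/ x U - moved s x U != 0.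
Proof.
rewrite /sweep; have [sum0|/sumr_neq0P[S /eqP fSU mS] _] :=
  eqVneq (\sum_(S | f S == U) moved s x S) 0.
  by rewrite sum0 add0r; right.
by left; exists S.
Qed.

Lemma sweep_in s : A (sweep s x).
Proof.
split.
  move=> U; rewrite addr_ge0 ?subr_ge0 ?moved_le //.
  by apply: sumr_ge0 => S _; exact: moved_ge0.
split; first by rewrite big_split /= sum_fibers sumrB x_sum1 addrC subrK.
split.
  move=> U /sweep_neq0 [[S <- /moved_neq0 /x_P PS] | /unmoved_neq0 /x_P //].
  exact/Q_P/f_PQ.
move=> U1 U2 /sweep_neq0 + /sweep_neq0.
case=> [[S1 <- m1] | u1] [[S2 <- m2] | u2].
- by case: (x_chain (moved_neq0 m1) (moved_neq0 m2)) => S12; [left | right];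
    exact: f_homo.
- by left; exact: le_trans (f_le S1) (moved_le_unmoved m1 u2).
- by right; exact: le_trans (f_le S2) (moved_le_unmoved m2 u1).
- exact: x_chain (unmoved_neq0 u1) (unmoved_neq0 u2).
Qed.

Lemma sweep0 : sweep 0 x = x.
Proof.
apply/funext => U; rewrite /sweep moved0 subr0 big1 ?add0r // => S _.
exact: moved0.
Qed.

Lemma sweep1 : sweep 1 x = push x.
Proof.
apply/funext => U; rewrite /sweep /push moved1 subrr addr0.
by apply: eq_bigr => S _; rewrite moved1.
Qed.

End Chain.

Lemma push_in x : A x -> B (push x).
Proof.
move=> [x_ge0 [x_sum1 [x_P x_chain]]].
split; first by move=> U; apply: sumr_ge0.
split; first by rewrite sum_fibers.
split; first by move=> U /sumr_neq0P[S /eqP <- /x_P]; exact: f_PQ.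
move=> U1 U2 /sumr_neq0P[S1 /eqP <- x1] /sumr_neq0P[S2 /eqP <- x2].
by case: (x_chain _ _ x1 x2) => S12; [left | right]; exact: f_homo.
Qed.

Lemma push_id x : B x -> push x = x.
Proof.
move=> [_ [_ [x_Q _]]]; apply/funext => U; rewrite /push big_mkcond /=.
rewrite (eq_bigr (fun S => if S == U then x S else 0)) -?big_mkcond.
  by rewrite big_pred1_eq.
by move=> S _; have [->|/x_Q/f_Q->] := eqVneq (x S) 0; rewrite ?if_same.
Qed.

Lemma sub_order_complex : B `<=` A.
Proof.
move=> x [x_ge0 [x_sum1 [x_Q x_chain]]]; split=> //; split=> //; split=> //.
by move=> S /x_Q /Q_P.
Qed.

Theorem order_complex_deflation_homotopy_equivalent : homotopy_equivalent R A B.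
Proof.
exists push, id; split.
- by split; [exact: continuous_subspaceT push_continuous | exact: push_in].
- split; first exact: continuous_subspaceT (fun x => @cvg_id _ _).
  exact: sub_order_complex.
- exists (fun p : R * X => sweep (1 - p.1) p.2); split.
  + exact: continuous_subspaceT sweep_continuous.
  + by move=> t x _ Ax; exact: sweep_in.
  + by move=> x Ax /=; rewrite subr0 sweep1.
  + by move=> x Ax /=; rewrite subrr sweep0.
- exists snd; split => [||x Bx|//].
  + by apply: continuous_subspaceT => p; exact: cvg_snd.
  + by [].
  + by rewrite /= push_id.
Qed.

End OrderComplexDeflation.

Section BalancedCore.
Context {R : realType} {d m : nat} (v : 'I_m -> 'rV[R]_d) (r : 'rV[R]_d).
Implicit Types (S : {set 'I_m}) (lam : 'I_m -> R) (x y : 'rV[R]_d).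

Definition conv_coords S x lam : Prop :=
  [/\ forall i, 0 <= lam i, forall i, i \notin S -> lam i = 0,
      \sum_i lam i = 1 & \sum_i lam i *: v i = x].

Lemma conv_coords_avg (J : finType) S x (w : J -> R) (L : J -> 'I_m -> R) :
    (forall k, 0 <= w k) -> \sum_k w k = 1 ->
    (forall k, conv_coords S x (L k)) ->
  conv_coords S x (fun i => \sum_k w k * L k i).
Proof.
move=> w_ge0 w_sum1 L_coords; split.
- by move=> i; apply: sumr_ge0 => k _; rewrite mulr_ge0 //; case: (L_coords k).
- move=> i iS; apply: big1 => k _.
  by case: (L_coords k) => _ L_S _ _; rewrite L_S ?mulr0.
- rewrite exchange_big /= -[RHS]w_sum1; apply: eq_bigr => k _.
  by case: (L_coords k) => _ _ L_sum _; rewrite -mulr_sumr L_sum mulr1.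
- under eq_bigr do rewrite scaler_suml.
  rewrite exchange_big /= -[RHS]scale1r -w_sum1 scaler_suml.
  apply: eq_bigr => k _.
  case: (L_coords k) => _ _ _ L_x; rewrite -L_x scaler_sumr.
  by apply: eq_bigr => i _; rewrite scalerA.
Qed.

Definition core S : {set 'I_m} :=
  [set i | `[< exists2 lam, conv_coords S r lam & 0 < lam i >]].

Lemma in_coreP S i :
  reflect (exists2 lam, conv_coords S r lam & 0 < lam i) (i \in core S).
Proof. by rewrite inE; exact: asboolP. Qed.

Lemma core_sub S : core S \subset S.
Proof.
apply/fintype.subsetP => i /in_coreP[lam [_ lam_S _ _]].
by apply: contraLR => /lam_S->; rewrite ltxx.
Qed.

Lemma core_homo : {homo core : S T / S \subset T}.
Proof.
move=> S T ST; apply/fintype.subsetP => i.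
move=> /in_coreP[lam [lam_ge0 lam_S lam_sum lam_r] lam_i].
apply/in_coreP; exists lam => //; split => // j jT; apply: lam_S.
by apply: contra jT; exact: (fintype.subsetP ST).
Qed.

Lemma conv_coords_pos_core S : in_conv v S r ->
  exists2 lam, conv_coords (core S) r lam & forall i, i \in core S -> 0 < lam i.
Proof.
move=> [lam0 lam0_coords].
have [i0 _ _] : exists2 i : 'I_m, true & lam0 i != 0.
  by apply: sumr_neq0P; case: lam0_coords => _ _ -> _; exact: oner_neq0.
have m_gt0 : 0 < m%:R :> R by rewrite ltr0n (leq_ltn_trans (leq0n i0)).
have witness i : exists lam, conv_coords S r lam /\ (i \in core S -> 0 < lam i).
  have [/in_coreP[lam lam_coords lam_i] | _] := boolP (i \in core S).
    by exists lam.
  by exists lam0.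
have [L L_spec] := choice witness.
pose lam i := \sum_k m%:R^-1 * L k i.
have lam_coords : conv_coords S r lam.
  apply: conv_coords_avg => [k | | k]; first by rewrite invr_ge0 ltW.
    by rewrite sumr_const card_ord -[LHS]mulr_natr mulVf ?gt_eqF.
  by case: (L_spec k).
have lam_pos i : i \in core S -> 0 < lam i.
  move=> i_core; rewrite /lam (bigD1 i) //=; apply: ltr_pwDl.
    by rewrite mulr_gt0 ?invr_gt0 //; case: (L_spec i) => _; apply.
  apply: sumr_ge0 => k _; apply: mulr_ge0; first by rewrite invr_ge0 ltW.
  by case: (L_spec k) => -[L_ge0 _ _ _] _.
exists lam => //; have [lam_ge0 _ lam_sum lam_r] := lam_coords.
split => // i i_core.
apply/eqP; rewrite eq_le lam_ge0 andbT leNgt; apply: contra i_core => lam_i.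
by apply/in_coreP; exists lam.
Qed.

(* The coefficients are read off through the pseudo-inverse of the matrix with
   rows [v j - x] (j in S), a fixed linear map. *)
Lemma affine_coords_bound S x : exists2 K, 0 <= K & forall y, in_aff v S y ->
  exists c : 'I_m -> R, [/\ forall j, j \notin S -> c j = 0,
    \sum_j `|c j| <= K * `|y - x| & \sum_j c j *: (v j - x) = y - x].
Proof.
pose M : 'M[R]_(m, d) := \matrix_j (if j \in S then v j - x else 0).
pose K := \sum_j \sum_k `|pinvmx M k j|.
exists K; first by apply: sumr_ge0 => j _; apply: sumr_ge0.
move=> y [mu [mu_S mu_sum mu_y]].
have u_M : y - x = (\row_j mu j) *m M.
  rewrite mulmx_sum_row -mu_y -[x in _ - x]scale1r -mu_sum scaler_suml -sumrB.
  apply: eq_bigr => j _; rewrite rowK mxE -scalerBr.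
  by case: ifP => [//|/negbT/mu_S->]; rewrite !scale0r.
have c_M : (y - x) *m pinvmx M *m M = y - x.
  by apply: mulmxKpV; rewrite u_M submxMl.
exists (fun j => if j \in S then ((y - x) *m pinvmx M) 0 j else 0); split.
- by move=> j /negbTE->.
- rewrite mulrC /K mulr_sumr; apply: ler_sum => j _.
  case: ifP => _; last by rewrite normr0 mulr_ge0 ?sumr_ge0.
  exact: ler_norm_mulmx_entry.
- rewrite -[RHS]c_M [RHS]mulmx_sum_row; apply: eq_bigr => j _; rewrite rowK.
  by case: ifP => _; rewrite ?scale0r ?scaler0.
Qed.

(* For y in aff S near r write y - r = sum c_j (v_j - r) with c small; then
   c + (1 - sum c) lam are coordinates of y, nonnegative since lam is bounded
   below on S. *)
Lemma relint_of_pos_coords S lam : conv_coords S r lam ->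
  (forall i, i \in S -> 0 < lam i) -> in_relint_conv v S r.
Proof.
move=> [lam_ge0 lam_S lam_sum lam_r] lam_pos.
have [K K_ge0 coords] := affine_coords_bound S r.
pose delta := \big[Num.min/1]_(i in S) lam i.
have delta_gt0 : 0 < delta by apply: lt_bigmin => // i; exact: lam_pos.
have delta_le i : i \in S -> delta <= lam i by move=> iS; exact: bigmin_le_cond.
have lam_le1 i : lam i <= 1 by rewrite -lam_sum (bigD1 i) //= lerDl sumr_ge0.
split; first by exists lam.
exists (delta / (2 * (K + 1))); first by rewrite divr_gt0 // mulr_gt0 //; lra.
move=> y /coords [c [c_S c_sum c_y]] y_near.
set eta := \sum_j `|c j| in c_sum; set sg := \sum_j c j.
have eta_lt : 2 * eta < delta.
  move: y_near; rewrite ltr_pdivlMr; last by rewrite mulr_gt0 //; lra.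
  by have := normr_ge0 (y - r); nra.
have sg_le : `|sg| <= eta by exact: ler_norm_sum.
have c_le j : `|c j| <= eta by rewrite /eta (bigD1 j) //= lerDl sumr_ge0.
exists (fun j => c j + (1 - sg) * lam j); split.
- move=> j; have [jS|/negbTE jS] := boolP (j \in S); last first.
    by rewrite c_S ?lam_S ?jS // mulr0 addr0.
  have := delta_le j jS; have := lam_le1 j; have := lam_ge0 j.
  move: (c_le j) sg_le; rewrite !ler_norml => /andP[c_lo _] /andP[_ sg_hi].
  by nra.
- by move=> j /[dup] /c_S-> /lam_S->; rewrite mulr0 addr0.
- by rewrite big_split /= -mulr_sumr lam_sum mulr1 addrC subrK.
- under eq_bigr do rewrite scalerDl -scalerA.
  rewrite big_split /= -scaler_sumr lam_r.
  have -> : \sum_j c j *: v j = y - r + sg *: r.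
    rewrite -c_y /sg scaler_suml -big_split /=; apply: eq_bigr => j _.
    by rewrite scalerBr subrK.
  by rewrite scalerBl scale1r addrACA subrK subrr addr0.
Qed.

Lemma core_balanced S : weakly_balanced v r S -> balanced v r (core S).
Proof.
by move=> /conv_coords_pos_core[lam lam_coords lam_pos];
  exact: relint_of_pos_coords lam_coords lam_pos.
Qed.

(* Push [r] slightly away from [v i] inside aff S; by balancedness the new
   point is still in conv S, and solving back for [r] puts weight on [v i]. *)
Lemma core_id S : balanced v r S -> core S = S.
Proof.
move=> [[lam [lam_ge0 lam_S lam_sum lam_r]] [e e_gt0 near_conv]].
apply/eqP; rewrite finset.eqEsubset core_sub /=; apply/fintype.subsetP => i iS.
apply/in_coreP; pose w := r - v i; pose t := e / (2 * (`|w| + 1)).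
have w_ge0 := normr_ge0 w.
have t_gt0 : 0 < t by rewrite divr_gt0 // mulr_gt0 //; lra.
have tw_lt : t * `|w| < e.
  rewrite /t mulrAC ltr_pdivrMr; last by rewrite mulr_gt0 //; lra.
  by nra.
have neq_i j : j \notin S -> (j == i) = false.
  by move=> jS; apply: contraNF jS => /eqP->.
have scale_delta (a : R) j : (if j == i then a else 0) *: v j =
    if j == i then a *: v j else 0.
  by case: ifP => _; rewrite ?scale0r.
have y_aff : in_aff v S (r + t *: w).
  exists (fun j => (1 + t) * lam j - (if j == i then t else 0)); split.
  - by move=> j jS; rewrite lam_S // neq_i // mulr0 subr0.
  - by rewrite sumrB -mulr_sumr lam_sum mulr1 sumr_delta addrK.
  - under eq_bigr do rewrite scalerBl -scalerA scale_delta.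
    rewrite sumrB -scaler_sumr lam_r sumr_delta /w.
    by rewrite scalerDl scale1r scalerBr addrA.
have y_near : `|r + t *: w - r| < e.
  by rewrite addrAC subrr add0r normrZ gtr0_norm.
have [nu [nu_ge0 nu_S nu_sum nu_y]] := near_conv _ y_aff y_near.
have t1_gt0 : 0 < 1 + t by lra.
exists (fun j => (1 + t)^-1 * (nu j + (if j == i then t else 0))); last first.
  by rewrite eqxx mulr_gt0 ?invr_gt0 //; have := nu_ge0 i; lra.
split.
- move=> j; apply: mulr_ge0; first by rewrite invr_ge0 ltW.
  by apply: addr_ge0 => //; case: ifP => _ //; exact: ltW.
- by move=> j jS; rewrite nu_S // neq_i // addr0 mulr0.
- by rewrite -mulr_sumr big_split /= nu_sum sumr_delta mulVf ?gt_eqF.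
- under eq_bigr do rewrite -scalerA scalerDl scale_delta.
  rewrite -scaler_sumr big_split /= nu_y sumr_delta /w scalerBr addrA subrK.
  by rewrite -{1}[r]scale1r -scalerDl scalerA mulVf ?gt_eqF ?scale1r.
Qed.

End BalancedCore.

Import Order.DefaultSetSubsetOrder.

Theorem lemma1 (R : realType) (d m : nat) (v : 'I_m -> 'rV[R]_d)
    (r : 'rV[R]_d) (v_inj : injective v) :
  homotopy_equivalent R
    (@order_complex_realization R _ (fun S T : {set 'I_m} => S \subset T)
       (fun S => weakly_balanced v r S /\ S != [set: 'I_m]%SET))
    (@order_complex_realization R _ (fun S T : {set 'I_m} => S \subset T)
       (fun S => balanced v r S /\ S != [set: 'I_m]%SET)).
Proof.
(* Subsets are index sets, so repeated points are harmless and v_inj is not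
   needed. *)
apply: (@order_complex_deflation_homotopy_equivalent _ {set 'I_m} R _ _
  (core v r)).
- exact: core_sub.
- exact: core_homo.
- move=> S [/core_balanced core_bal S_neqT]; split=> //.
  apply: contraNneq S_neqT => coreT.
  by rewrite finset.eqEsubset finset.subsetT -coreT core_sub.
- by move=> S [[S_conv _] S_neqT].
- by move=> S [/core_id].
Qed.
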